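(* Let $D\geq 4$ and $n\geq 1$ be integers. Let $\mathcal{S}_{(1)},\mathcal{S}_{(2)},\mathcal{S}_{(3)},\mathcal{S}_{(n+2)},\mathcal{S}_{(n+3)},\mathcal{S}_{(n+4)}$ be scalar curvature invariants (built from the metric and the Riemann tensor) such that for each of these orders $m\in\{1,2,3,n+2,n+3,n+4\}$ and every function $f(r)$ $$\mathcal{S}_{(m)}|_f = r^{2-D}\frac{\mathrm{d}}{\mathrm{d}r}\Big[r^{D-1}\Big(B+\tfrac{D-4}{4}\psi\Big)^{m-1}\Big(2(m-2)B-(D-4+2m)\psi\Big)\Big].$$ Define $$\mathcal{S}_{(n+5)}=-\frac{3(n+3)\mathcal{S}_{(1)}\mathcal{S}_{(n+4)}}{4(D-1)(n+1)}+\frac{3(n+4)\mathcal{S}_{(2)}\mathcal{S}_{(n+3)}}{4(D-1)n}-\frac{(n+3)(n+4)\mathcal{S}_{(3)}\mathcal{S}_{(n+2)}}{4(D-1)n(n+1)}.$$ Then for every $f(r)$, $\mathcal{S}_{(n+5)}|_f$ is given by the same formula with $m=n+5$; in particular $\mathcal{S}_{(n+5)}$ is of the GQTG class.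
   Context: Consider the metric $\mathrm{d}s^2=-f(r)\mathrm{d}t^2+\mathrm{d}r^2/f(r)+r^2\mathrm{d}\Sigma^2_{k}$ in $D$ dimensions, where $\mathrm{d}\Sigma^2_k$ is the metric of a $(D-2)$-dimensional space of constant sectional curvature $k\in\{1,0,-1\}$. For a scalar curvature invariant $\mathcal{L}$, $\mathcal{L}|_f$ denotes its evaluation on this metric, a function of $r,f,f',f''$. Set $A=f''(r)/2$, $B=-f'(r)/(2r)$, $\psi=(k-f(r))/r^2$. A density $\mathcal{L}$ is of the GQTG class if $r^{D-2}\mathcal{L}|_f=\frac{\mathrm{d}}{\mathrm{d}r}F_0(r,f,f')$ for some function $F_0$, for all $f$ (equivalently, the Euler–Lagrange equation of $f$ for $r^{D-2}\mathcal{L}|_f$ vanishes identically). *)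

From Stdlib Require Import Reals.
From Coquelicot Require Import Coquelicot.
Open Scope R_scope.

(* Evaluation of a scalar density on the ansatz f : its value at radius r is a
   function of the profile f.  We model an invariant through its evaluation map
   L|_f, i.e. a map  (R -> R) -> (R -> R). *)

Definition Bf (f : R -> R) (r : R) : R := - Derive f r / (2 * r).

Definition psif (k : R) (f : R -> R) (r : R) : R := (k - f r) / r ^ 2.

Definition bracket (D : nat) (k : R) (m : nat) (f : R -> R) (r : R) : R :=
  r ^ (D - 1) * (Bf f r + (INR D - 4) / 4 * psif k f r) ^ (m - 1)
  * (2 * (INR m - 2) * Bf f r - (INR D - 4 + 2 * INR m) * psif k f r).

Definition Sform (D : nat) (k : R) (m : nat) (f : R -> R) (r : R) : R :=
  / r ^ (D - 2) * Derive (bracket D k m f) r.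

Definition twice_diff (f : R -> R) : Prop :=
  (forall x, ex_derive f x) /\ (forall x, ex_derive (Derive f) x).

Definition GQTG (D : nat) (L : (R -> R) -> R -> R) : Prop :=
  exists F0 : R -> R -> R -> R,
    forall f : R -> R, twice_diff f -> forall r : R, 0 < r ->
      r ^ (D - 2) * L f r = Derive (fun x => F0 x (f x) (Derive f x)) r.

(** Writing [theta = r d/dr], one has [theta psi = 2 (B - psi)], so [S_(m)|_f] is
    [(D-1) X^(m-1) Y_m + theta (X^(m-1) Y_m)] with [X = B + (D-4)/4 psi]: a polynomial in
    [B], [psi], [theta B] and [X^(m-2)].  After factoring out [X^n], the quadratic relation
    becomes an identity of rational functions in [B], [psi], [theta B], [n] and [D].  Since
    [S_(n+5)|_f] then equals the formula with [m = n + 5], [r^(D-2) S_(n+5)|_f] is the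
    derivative of [r^(D-1) X^(n+4) Y_(n+5)], a function of [r], [f] and [f']. *)

From Stdlib Require Import Reals Lra Lia.
From Coquelicot Require Import Coquelicot.
Open Scope R_scope.

(* [Sform D k m f r] in terms of [B = Bf f r], [psi = psif k f r] and [dB = r B'(r)];
   [dpsi], [dX], [dY] are [r d/dr] of [psi], [X], [Y].  At [m = 1] the truncated
   exponent [m - 2] is harmless since its coefficient [INR (m - 1)] vanishes. *)
Definition radial_value (d : R) (m : nat) (B psi dB : R) : R :=
  let mu := INR m in
  let dpsi := 2 * (B - psi) in
  let X := B + (d - 4) / 4 * psi in
  let dX := dB + (d - 4) / 4 * dpsi in
  let Y := 2 * (mu - 2) * B - (d - 4 + 2 * mu) * psi in
  let dY := 2 * (mu - 2) * dB - (d - 4 + 2 * mu) * dpsi in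
  (d - 1) * X ^ (m - 1) * Y + INR (m - 1) * X ^ (m - 2) * dX * Y + X ^ (m - 1) * dY.

Lemma ex_derive_Bf (f : R -> R) (r : R) :
  twice_diff f -> r <> 0 -> ex_derive (Bf f) r.
Proof.
intros [df ddf] r0; unfold Bf; auto_derive; auto.
Qed.

Lemma is_derive_psif (k : R) (f : R -> R) (r : R) :
  ex_derive f r -> r <> 0 ->
  is_derive (psif k f) r (2 * (Bf f r - psif k f r) / r).
Proof.
intros df r0; unfold psif, Bf; auto_derive.
- repeat split; auto; intro; apply r0; nra.
- change (fun x => f x) with f; field; auto.
Qed.

Lemma Sform_radial_value (D m : nat) (k : R) (f : R -> R) (r : R) :
  (2 <= D)%nat -> twice_diff f -> 0 < r ->
  Sform D k m f r = radial_value (INR D) m (Bf f r) (psif k f r) (r * Derive (Bf f) r).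
Proof.
intros HD Hf Hr.
assert (r0 : r <> 0) by lra.
pose proof (ex_derive_Bf f r Hf r0) as dB.
pose proof (is_derive_psif k f r (proj1 Hf r) r0) as dpsi.
evar (L : R).
assert (Hbr : is_derive (bracket D k m f) r L).
{ unfold bracket; auto_derive.
  - repeat split; try exact dB; eexists; exact dpsi.
  - subst L; reflexivity. }
unfold Sform; rewrite (is_derive_unique _ _ _ Hbr); subst L.
change (fun x => Bf f x) with (Bf f); change (fun x => psif k f x) with (psif k f).
rewrite (is_derive_unique _ _ _ dpsi).
unfold radial_value.
replace (D - 1)%nat with (S (D - 2)) by lia.
replace (m - 2)%nat with (pred (m - 1)) by lia.
rewrite <- tech_pow_Rmult, S_INR, minus_INR by lia.
assert (rD : r ^ (D - 2) <> 0) by (apply pow_nonzero; lra).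
simpl pred; change (INR 2) with 2.
field; auto.
Qed.

Lemma radial_value_relation (d B psi dB : R) (n : nat) :
  (1 <= n)%nat -> d <> 1 ->
  let v m := radial_value d m B psi dB in
  let nr := INR n in
  v (n + 5)%nat =
    - (3 * (nr + 3) * v 1%nat * v (n + 4)%nat) / (4 * (d - 1) * (nr + 1))
    + (3 * (nr + 4) * v 2%nat * v (n + 3)%nat) / (4 * (d - 1) * nr)
    - ((nr + 3) * (nr + 4) * v 3%nat * v (n + 2)%nat) / (4 * (d - 1) * nr * (nr + 1)).
Proof.
intros Hn Hd v nr; unfold v, radial_value.
assert (nr0 : nr <> 0) by (apply not_0_INR; lia).
assert (nr1 : nr + 1 <> 0) by (unfold nr; rewrite <- S_INR; apply not_0_INR; lia).
assert (d1 : d - 1 <> 0) by lra.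
replace (n + 2 - 1)%nat with (n + 1)%nat by lia.
replace (n + 3 - 1)%nat with (n + 2)%nat by lia.
replace (n + 4 - 1)%nat with (n + 3)%nat by lia.
replace (n + 5 - 1)%nat with (n + 4)%nat by lia.
replace (n + 2 - 2)%nat with n by lia.
replace (n + 3 - 2)%nat with (n + 1)%nat by lia.
replace (n + 4 - 2)%nat with (n + 2)%nat by lia.
replace (n + 5 - 2)%nat with (n + 3)%nat by lia.
rewrite !pow_add, !plus_INR; fold nr.
set (Xn := (B + (d - 4) / 4 * psi) ^ n).
simpl; field; auto.
Qed.

Lemma GQTG_Sform (D m : nat) (k : R) : GQTG D (Sform D k m).
Proof.
(* Evaluated at [(x, f x, Derive f x)] this witness is [bracket D k m f] up to conversion. *)
exists (fun x y z => x ^ (D - 1) * (- z / (2 * x) + (INR D - 4) / 4 * ((k - y) / x ^ 2)) ^ (m - 1)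
  * (2 * (INR m - 2) * (- z / (2 * x)) - (INR D - 4 + 2 * INR m) * ((k - y) / x ^ 2))).
intros f _ r Hr; unfold Sform.
rewrite <- Rmult_assoc, Rinv_r, Rmult_1_l by (apply pow_nonzero; lra).
reflexivity.
Qed.

Lemma GQTG_ext (D : nat) (L L' : (R -> R) -> R -> R) :
  (forall f, twice_diff f -> forall r, 0 < r -> L f r = L' f r) ->
  GQTG D L' -> GQTG D L.
Proof.
intros HL [F0 HF0]; exists F0; intros f Hf r Hr.
rewrite HL by assumption; apply HF0; assumption.
Qed.

Theorem mainTheorem2 (D n : nat) (k : R)
  (S1 S2 S3 Sn2 Sn3 Sn4 : (R -> R) -> R -> R) :
  (4 <= D)%nat -> (1 <= n)%nat ->
  (k = 1 \/ k = 0 \/ k = -1) ->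
  (forall f, twice_diff f -> forall r, 0 < r ->
     S1 f r = Sform D k 1 f r /\ S2 f r = Sform D k 2 f r /\
     S3 f r = Sform D k 3 f r /\ Sn2 f r = Sform D k (n + 2) f r /\
     Sn3 f r = Sform D k (n + 3) f r /\ Sn4 f r = Sform D k (n + 4) f r) ->
  let Dr := INR D in
  let nr := INR n in
  let Sn5 : (R -> R) -> R -> R := fun f r =>
      - (3 * (nr + 3) * S1 f r * Sn4 f r) / (4 * (Dr - 1) * (nr + 1))
      + (3 * (nr + 4) * S2 f r * Sn3 f r) / (4 * (Dr - 1) * nr)
      - ((nr + 3) * (nr + 4) * S3 f r * Sn2 f r) / (4 * (Dr - 1) * nr * (nr + 1)) in
  (forall f, twice_diff f -> forall r, 0 < r -> Sn5 f r = Sform D k (n + 5) f r)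
  /\ GQTG D Sn5.
Proof.
intros HD Hn _ HS Dr nr Sn5.
assert (HSn5 : forall f, twice_diff f -> forall r, 0 < r -> Sn5 f r = Sform D k (n + 5) f r).
{ intros f Hf r Hr; unfold Sn5.
  destruct (HS f Hf r Hr) as (-> & -> & -> & -> & -> & ->).
  assert (D2 : (2 <= D)%nat) by lia.
  rewrite !(Sform_radial_value D _ k f r D2 Hf Hr).
  symmetry; apply radial_value_relation; [exact Hn |].
  apply not_1_INR; lia. }
split; [exact HSn5 |].
exact (GQTG_ext D Sn5 _ HSn5 (GQTG_Sform D (n + 5) k)).
Qed.
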